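(* Let ${\mathbb K}$ be a field, $n\geqslant 2$ and $N$ a positive integer. Let $L$ be a set of lines of $\mathrm{AG}_n({\mathbb K})$, let $D\subseteq\mathrm{PG}_{n-1}({\mathbb K})$ be the set of directions of the lines of $L$, and let $S$ be a set of points of $\mathrm{AG}_n({\mathbb K})$ such that every line of $L$ is incident with at least $N$ points of $S$. If $D$ contains an $N^{n-1}$ grid then, for any positive integer $r$, $$\binom{2r+n-2}{n}|S|\geqslant\binom{rN+n-1}{n}.$$
   Context: The direction of an affine line $\{u+\lambda v:\lambda\in{\mathbb K}\}$ is the point $\langle v\rangle$ of $\mathrm{PG}_{n-1}({\mathbb K})$. An $N^{n-1}$ grid in $\mathrm{PG}_{n-1}({\mathbb K})$ is a point set which, with respect to a suitable basis, has the form $\{\langle(a_1,\ldots,a_{n-1},1)\rangle : a_i\in A_i\}$, where each $A_i\subseteq{\mathbb K}$ has size $N$. *)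

From HB Require Import structures.
From mathcomp Require Import all_boot all_order all_algebra.
From mathcomp Require Import finmap.
Set Implicit Arguments. Unset Strict Implicit. Unset Printing Implicit Defensive.
Import GRing.Theory.
Local Open Scope ring_scope.

(* Points of AG_n(K) are row vectors 'rV[K]_n.  An affine line is given by a
   pair (u, v) with v <> 0; its point set is {u + lam v : lam in K}. *)
Definition on_line (K : fieldType) (n : nat) (uv : 'rV[K]_n * 'rV[K]_n)
  (x : 'rV[K]_n) : Prop :=
  exists lam : K, x = (fst uv) + lam *: (snd uv).

Definition incident_atleast (K : fieldType) (n : nat) (N : nat)
  (S : {fset 'rV[K]_n}) (uv : 'rV[K]_n * 'rV[K]_n) : Prop :=
  exists T : {fset 'rV[K]_n},
    [/\ (T `<=` S)%fset, (N <= #|` T|)%N & forall x, x \in T -> on_line uv x].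

(* D = set of directions of the lines of L, as a set of points of
   PG_{n-1}(K): the nonzero vector w represents a point of D iff
   <w> = <v> for some line (u,v) of L, i.e. w = c v with c <> 0. *)
Definition direction_set (K : fieldType) (n : nat)
  (L : 'rV[K]_n * 'rV[K]_n -> Prop) (w : 'rV[K]_n) : Prop :=
  exists uv, L uv /\ exists2 c : K, c != 0 & w = c *: (snd uv).

(* D contains an N^{n-1} grid: there is a basis (rows of an invertible
   matrix B) and sets A_0,...,A_{n-2} of size N such that every point
   <(a_0,...,a_{n-2},1)> (coordinates w.r.t. B) lies in D. *)
Definition contains_grid (K : fieldType) (n N : nat)
  (D : 'rV[K]_n -> Prop) : Prop :=
  exists (B : 'M[K]_n) (A : 'I_n -> {fset K}),
    [/\ B \in unitmx,
        (forall i : 'I_n, (i < n.-1)%N -> #|` A i| = N) &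
        forall a : 'rV[K]_n,
          (forall i : 'I_n, (i < n.-1)%N -> a ord0 i \in A i) ->
          (forall i : 'I_n, (i : nat) = n.-1 -> a ord0 i = 1) ->
          D (a *m B)].

From HB Require Import structures.
From mathcomp Require Import all_boot all_order all_algebra.
From mathcomp Require Import finmap.
From mathcomp Require Import mpoly.
From mathcomp Require Import ring zify.
Set Implicit Arguments. Unset Strict Implicit. Unset Printing Implicit Defensive.
Import GRing.Theory.
Local Open Scope ring_scope.

(* Suppose the inequality fails.  Counting monomials, there is a nonzero [f]
   of degree [e < rN] vanishing to order [2r - 1] at every point of [S].  Put
   the grid in coordinates, so that a grid direction is [(a, 1)].  A line of
   direction [(a, 1)] meets [S] in [N] points; along it, each derivative of
   [f] of order [j < r] is a univariate polynomial of degree at most [e]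
   vanishing to order [2r - 1 - j >= r] at these [N] points, hence is zero.
   Its leading coefficient is the corresponding derivative of the top form
   [f_e] at [(a, 1)], so [y |-> f_e(y, 1)] vanishes to order [r] at every
   point of an [N^(n-1)] grid.  Since it has degree [< rN], it is zero
   (induction on the number of variables), contradicting [f_e <> 0]. *)

Section UnivariateMultiplicity.
Variable K : fieldType.

Lemma XsubC_expn_dvdp (h : {poly K}) (x : K) (s : nat) :
  (forall l, (l < s)%N -> (h \Po ('X + x%:P))`_l = 0) ->
  ('X - x%:P) ^+ s %| h.
Proof.
move=> h_x; set g := h \Po ('X + x%:P).
have gE : g = drop_poly s g * 'X^s.
  rewrite -{1}(poly_take_drop s g).
  suff -> : take_poly s g = 0 by rewrite add0r.
  apply/polyP=> i; rewrite coef_take_poly coef0.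
  by case: ifP => // /h_x.
have -> : h = g \Po ('X - x%:P).
  by rewrite /g -comp_polyA comp_polyD comp_polyX comp_polyC subrK comp_polyXr.
by rewrite gE comp_polyM comp_Xn_poly dvdp_mulIr.
Qed.

Lemma poly_mult_roots_eq0 (h : {poly K}) (t s : nat) (xs : seq K) :
  (size h <= t.+1)%N -> uniq xs -> (t < size xs * s)%N ->
  (forall x, x \in xs -> forall l, (l < s)%N -> (h \Po ('X + x%:P))`_l = 0) ->
  h = 0.
Proof.
move=> sh uxs lt h_xs.
have dvd_h : (\prod_(x <- xs) ('X - x%:P)) ^+ s %| h.
  elim: xs uxs h_xs {lt} => [|y ys IH] /= uxs h_xs.
    by rewrite big_nil expr1n dvd1p.
  case/andP: uxs => yn uys.
  rewrite big_cons exprMn Gauss_dvdp.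
    rewrite XsubC_expn_dvdp ?IH // => [x xin|]; apply: h_xs.
      by rewrite inE xin orbT.
    by rewrite inE eqxx.
  apply: coprimep_expl; apply: coprimep_expr.
  by rewrite coprimep_sym coprimep_XsubC root_prod_XsubC.
apply/eqP; apply: contraT => hn0.
have size_le : ((size ((\prod_(x <- xs) ('X - x%:P)) ^+ s)).-1 <= t)%N.
  by move: (leq_trans (dvdp_leq hn0 dvd_h) sh); case: (size _).
by move: size_le; rewrite size_exp size_prod_XsubC /= leqNgt lt.
Qed.

End UnivariateMultiplicity.

Lemma coef_comp_poly_wide (R : comNzRingType) (p q : {poly R}) N n :
  (size p <= N)%N -> (p \Po q)`_n = \sum_(i < N) p`_i * (q ^+ i)`_n.
Proof.
move=> sp; rewrite coef_comp_poly (big_ord_widen N (fun i => p`_i * (q ^+ i)`_n) sp).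
rewrite [RHS](bigID (fun i : 'I_N => (i < size p)%N)) /= [X in _ + X]big1 ?addr0 //.
by move=> i; rewrite -leqNgt => /(nth_default 0) ->; rewrite mul0r.
Qed.

Notation msubst h := (comp_mpoly [tuple h i | i < _]).

Section Substitution.
Variable K : fieldType.

Lemma msubstX n l (h : 'I_n -> {mpoly K[l]}) i : msubst h 'X_i = h i.
Proof. by rewrite comp_mpolyXU -tnth_nth tnth_mktuple. Qed.

Lemma msubstXm n l (h : 'I_n -> {mpoly K[l]}) m :
  msubst h 'X_[m] = \prod_(i < n) h i ^+ m i.
Proof. by rewrite comp_mpolyX; apply: eq_bigr => i _; rewrite tnth_mktuple. Qed.

Lemma msubstE n l (h : 'I_n -> {mpoly K[l]}) p :
  msubst h p = \sum_(m <- msupp p) p@_m *: \prod_(i < n) h i ^+ m i.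
Proof.
rewrite comp_mpolyE; apply: eq_bigr => m _; congr (_ *: _).
by apply: eq_bigr => i _; rewrite tnth_mktuple.
Qed.

Lemma eq_msubst n l (h h' : 'I_n -> {mpoly K[l]}) p :
  h =1 h' -> msubst h p = msubst h' p.
Proof. by move=> e; rewrite (eq_mktuple _ e). Qed.

Lemma mpoly_morph_eq n (T : nzRingType) (phi psi : {mpoly K[n]} -> T) :
  {morph phi : x y / x + y} -> {morph psi : x y / x + y} ->
  {morph phi : x y / x * y} -> {morph psi : x y / x * y} ->
  (forall c, phi c%:MP = psi c%:MP) -> (forall i, phi 'X_i = psi 'X_i) ->
  phi =1 psi.
Proof.
move=> phD psD phM psM hC hX.
have hXn i e : phi ('X_i ^+ e) = psi ('X_i ^+ e).
  elim: e => [|e IH]; first by rewrite !expr0 -mpolyC1 hC.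
  by rewrite !exprS phM psM IH hX.
have hXm m : phi 'X_[m] = psi 'X_[m].
  rewrite mpolyXE_id; elim/big_rec: _ => [|i x _ IH].
    by rewrite -mpolyC1 hC.
  by rewrite phM psM IH hXn.
elim/mpolyind => [|c m p _ _ IH]; first by rewrite -mpolyC0 hC.
by rewrite phD psD -mul_mpolyC phM psM hC hXm IH.
Qed.

Lemma msubst_comp n l q (h2 : 'I_n -> {mpoly K[l]}) (h1 : 'I_l -> {mpoly K[q]}) p :
  msubst h1 (msubst h2 p) = msubst (fun i => msubst h1 (h2 i)) p.
Proof.
move: p; apply: mpoly_morph_eq => [x y|x y|x y|x y|c|i].
- by rewrite !rmorphD.
- by rewrite rmorphD.
- by rewrite !rmorphM.
- by rewrite rmorphM.
- by rewrite !comp_mpolyC.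
- by rewrite !msubstX.
Qed.

End Substitution.

Section SupportBounds.
Variables (K : fieldType) (n : nat).
Implicit Types (p q : {mpoly K[n]}) (P : pred 'X_{1..n}).

Lemma msupp_sub0 P : {subset msupp (0 : {mpoly K[n]}) <= P}.
Proof. by move=> m; rewrite msupp0. Qed.

Lemma msupp_subD P p q :
  {subset msupp p <= P} -> {subset msupp q <= P} -> {subset msupp (p + q) <= P}.
Proof. by move=> hp hq m /msuppD_le; rewrite mem_cat => /orP[/hp|/hq]. Qed.

Lemma msupp_subZ P c p : {subset msupp p <= P} -> {subset msupp (c *: p) <= P}.
Proof. by move=> hp m /msuppZ_le /hp. Qed.

Lemma msupp_sub_sum P (I : Type) (r : seq I) (F : I -> {mpoly K[n]}) :
  (forall i, {subset msupp (F i) <= P}) -> {subset msupp (\sum_(i <- r) F i) <= P}.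
Proof.
move=> hF; elim/big_rec: _ => [|i x _ IH]; first exact: msupp_sub0.
exact: msupp_subD.
Qed.

Lemma msupp_subM P1 P2 P3 p q :
  {subset msupp p <= P1} -> {subset msupp q <= P2} ->
  (forall m1 m2, P1 m1 -> P2 m2 -> P3 (m1 + m2)%MM) ->
  {subset msupp (p * q) <= P3}.
Proof. by move=> hp hq h m /msuppM_le/allpairsP[[m1 m2] /= [/hp ? /hq ? ->]]; apply: h. Qed.

End SupportBounds.

Definition wdeg n (w : 'I_n -> nat) (m : 'X_{1..n}) := (\sum_(i < n) m i * w i)%N.

Notation wdeg_ge w j p := {subset msupp p <= leq j \o wdeg w}.
Notation wdeg_le w j p := {subset msupp p <= leq^~ j \o wdeg w}.
Notation wdeg_lt w j p := {subset msupp p <= ltn^~ j \o wdeg w}.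

Section WeightedDegree.
Variables (K : fieldType) (n : nat) (w : 'I_n -> nat).
Implicit Types (p q : {mpoly K[n]}) (m : 'X_{1..n}).

Lemma wdegD m1 m2 : wdeg w (m1 + m2)%MM = (wdeg w m1 + wdeg w m2)%N.
Proof. by rewrite /wdeg -big_split; apply: eq_bigr => i _; rewrite mnmDE mulnDl. Qed.

Lemma wdeg0 : wdeg w 0%MM = 0%N.
Proof. by rewrite /wdeg big1 // => i _; rewrite mnm0E. Qed.

Lemma wdegU i : wdeg w U_(i)%MM = w i.
Proof.
rewrite /wdeg (bigD1 i) //= mnm1E eqxx mul1n big1 ?addn0 // => j ji.
by rewrite mnm1E eq_sym (negbTE ji).
Qed.

Lemma wdeg_ge0 p : wdeg_ge w 0 p.
Proof. by move=> m _; rewrite unfold_in. Qed.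

Lemma wdeg_geM a b p q : wdeg_ge w a p -> wdeg_ge w b q -> wdeg_ge w (a + b)%N (p * q).
Proof. by move=> hp hq; apply: msupp_subM hp hq _ => m1 m2 /= h1 h2; rewrite wdegD leq_add. Qed.

Lemma wdeg_leM a b p q : wdeg_le w a p -> wdeg_le w b q -> wdeg_le w (a + b)%N (p * q).
Proof. by move=> hp hq; apply: msupp_subM hp hq _ => m1 m2 /= h1 h2; rewrite wdegD leq_add. Qed.

Lemma wdeg_ltM a b p q : wdeg_lt w a p -> wdeg_le w b q -> wdeg_lt w (a + b)%N (p * q).
Proof.
move=> hp hq; apply: msupp_subM hp hq _ => m1 m2 /= h1 h2.
by rewrite wdegD -addSn leq_add.
Qed.

Lemma wdeg_le1 : wdeg_le w 0 (1 : {mpoly K[n]}).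
Proof. by move=> m; rewrite msupp1 inE => /eqP ->; rewrite unfold_in /= wdeg0. Qed.

Lemma wdeg_geX a e p : wdeg_ge w a p -> wdeg_ge w (a * e)%N (p ^+ e).
Proof.
move=> hp; elim: e => [|e IH]; first by rewrite muln0; apply: wdeg_ge0.
by rewrite exprS mulnS; apply: wdeg_geM.
Qed.

Lemma wdeg_leX a e p : wdeg_le w a p -> wdeg_le w (a * e)%N (p ^+ e).
Proof.
move=> hp; elim: e => [|e IH]; first by rewrite muln0 expr0; apply: wdeg_le1.
by rewrite exprS mulnS; apply: wdeg_leM.
Qed.

Lemma wdeg_ge_trans a b p : (a <= b)%N -> wdeg_ge w b p -> wdeg_ge w a p.
Proof. by move=> ab hp m /hp; apply: leq_trans. Qed.

Lemma wdeg_le_trans a b p : (a <= b)%N -> wdeg_le w a p -> wdeg_le w b p.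
Proof. by move=> ab hp m /hp /leq_trans; apply. Qed.

Lemma wdeg_lt_trans a b p : (a <= b)%N -> wdeg_lt w a p -> wdeg_lt w b p.
Proof. by move=> ab hp m /hp /leq_trans; apply. Qed.

Lemma wdeg_ge_coef j p m : wdeg_ge w j p -> (wdeg w m < j)%N -> p@_m = 0.
Proof.
move=> hp lt; apply: memN_msupp_eq0; apply/negP => /hp.
by rewrite unfold_in /= leqNgt lt.
Qed.

Lemma wdeg_le_coef j p m : wdeg_le w j p -> (j < wdeg w m)%N -> p@_m = 0.
Proof.
move=> hp lt; apply: memN_msupp_eq0; apply/negP => /hp.
by rewrite unfold_in /= leqNgt lt.
Qed.

Lemma wdeg_lt_coef j p m : wdeg_lt w j p -> (j <= wdeg w m)%N -> p@_m = 0.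
Proof.
move=> hp lt; apply: memN_msupp_eq0; apply/negP => /hp.
by rewrite unfold_in /= ltnNge lt.
Qed.

Lemma wdeg_leC j (c : K) : wdeg_le w j (c%:MP : {mpoly K[n]}).
Proof.
move=> m; rewrite msuppC; case: ifP => _ //; rewrite inE => /eqP ->.
by rewrite unfold_in /= wdeg0.
Qed.

Lemma wdeg_ltC j (c : K) : wdeg_lt w j.+1 (c%:MP : {mpoly K[n]}).
Proof. exact: wdeg_leC. Qed.

Lemma wdeg_geXU i : wdeg_ge w (w i) ('X_i : {mpoly K[n]}).
Proof. by move=> m; rewrite msuppX inE => /eqP ->; rewrite unfold_in /= wdegU. Qed.

Lemma wdeg_leXU i : wdeg_le w (w i) ('X_i : {mpoly K[n]}).
Proof. by move=> m; rewrite msuppX inE => /eqP ->; rewrite unfold_in /= wdegU. Qed.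

Lemma wdeg_lt_expB a e p q :
  wdeg_le w a p -> wdeg_le w a q -> wdeg_lt w a (p - q) -> wdeg_lt w (a * e)%N (p ^+ e - q ^+ e).
Proof.
move=> hp hq hd; elim: e => [|e IH].
  by rewrite !expr0 subrr; apply: msupp_sub0.
have -> : p ^+ e.+1 - q ^+ e.+1 = (p - q) * p ^+ e + (p ^+ e - q ^+ e) * q.
  by rewrite !exprS; ring.
rewrite mulnS; apply: msupp_subD; first by apply: wdeg_ltM => //; apply: wdeg_leX.
by rewrite addnC; apply: wdeg_ltM.
Qed.

End WeightedDegree.

Lemma wdeg1 n (m : 'X_{1..n}) : wdeg (fun _ => 1%N) m = mdeg m.
Proof. by rewrite /wdeg mdegE; apply: eq_bigr => i _; rewrite muln1. Qed.

Lemma msize_wdeg_le (K : fieldType) n (p : {mpoly K[n]}) e :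
  (msize p <= e.+1)%N -> wdeg_le (fun _ => 1%N) e p.
Proof. by move=> sp m /msize_mdeg_lt /leq_trans /(_ sp); rewrite unfold_in /= wdeg1. Qed.

Lemma wdeg_le_msize (K : fieldType) n (p : {mpoly K[n]}) e :
  wdeg_le (fun _ => 1%N) e p -> (msize p <= e.+1)%N.
Proof.
move=> hp; rewrite msizeE; apply/bigmax_leqP_seq => m /hp + _.
by rewrite unfold_in /= wdeg1.
Qed.

Section SubstitutionBounds.
Variables (K : fieldType) (n l : nat) (w : 'I_n -> nat) (w' : 'I_l -> nat).
Implicit Types (p : {mpoly K[n]}) (h : 'I_n -> {mpoly K[l]}).

Lemma msubst_wdeg_ge h j p :
  wdeg_ge w j p -> (forall i, wdeg_ge w' (w i) (h i)) -> wdeg_ge w' j (msubst h p).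
Proof.
move=> hp hh; rewrite msubstE; apply: msupp_sub_sum => m.
have [mp|mNp] := boolP (m \in msupp p); last first.
  by rewrite memN_msupp_eq0 // scale0r; apply: msupp_sub0.
apply: msupp_subZ; apply: (wdeg_ge_trans (hp _ mp)); rewrite /wdeg.
elim/big_rec2: _ => [|i a x _ IH]; first exact: wdeg_ge0.
by rewrite mulnC; apply: wdeg_geM => //; apply: wdeg_geX.
Qed.

Lemma msubst_wdeg_le h j p :
  wdeg_le w j p -> (forall i, wdeg_le w' (w i) (h i)) -> wdeg_le w' j (msubst h p).
Proof.
move=> hp hh; rewrite msubstE; apply: msupp_sub_sum => m.
have [mp|mNp] := boolP (m \in msupp p); last first.
  by rewrite memN_msupp_eq0 // scale0r; apply: msupp_sub0.
apply: msupp_subZ; apply: (wdeg_le_trans (hp _ mp)); rewrite /wdeg.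
elim/big_rec2: _ => [|i a x _ IH]; first exact: wdeg_le1.
by rewrite mulnC; apply: wdeg_leM => //; apply: wdeg_leX.
Qed.

Lemma wdeg_lt_prodB h1 h2 :
  (forall i, wdeg_le w' (w i) (h1 i)) -> (forall i, wdeg_le w' (w i) (h2 i)) ->
  (forall i, wdeg_lt w' (w i) (h1 i - h2 i)) ->
  forall m : 'X_{1..n},
    wdeg_lt w' (wdeg w m) (\prod_(i < n) h1 i ^+ m i - \prod_(i < n) h2 i ^+ m i).
Proof.
move=> le1 le2 ltB m; rewrite /wdeg.
pose Q (x y : {mpoly K[l]}) (z : nat) :=
  [/\ wdeg_le w' z x, wdeg_le w' z y & wdeg_lt w' z (x - y)].
suff [] : Q (\prod_(i < n) h1 i ^+ m i) (\prod_(i < n) h2 i ^+ m i)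
            (\sum_(i < n) m i * w i)%N by [].
apply: (big_rec3 Q).
  by split; [apply: wdeg_le1|apply: wdeg_le1|rewrite subrr; apply: msupp_sub0].
move=> i x y z _ [hx hy hxy]; rewrite mulnC; split.
- by apply: wdeg_leM => //; apply: wdeg_leX.
- by apply: wdeg_leM => //; apply: wdeg_leX.
have -> : h1 i ^+ m i * x - h2 i ^+ m i * y =
          (h1 i ^+ m i - h2 i ^+ m i) * x + (x - y) * h2 i ^+ m i by ring.
apply: msupp_subD; first by apply: wdeg_ltM => //; apply: wdeg_lt_expB.
by rewrite addnC; apply: wdeg_ltM => //; apply: wdeg_leX.
Qed.

End SubstitutionBounds.

Section LastVariable.
Variables (K : fieldType) (k : nat).
Local Notation widen := (widen_ord (leqnSn _)).

Lemma lift_ord_max (j : 'I_k) : lift ord_max j = widen j.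
Proof. by apply: val_inj; rewrite /= /bump leqNgt ltn_ord. Qed.

Definition mnm_rcons (g : 'X_{1..k}) (l : nat) : 'X_{1..k.+1} :=
  (mnmwiden g + U_(ord_max) *+ l)%MM.

Definition mnm_trunc (m : 'X_{1..k.+1}) : 'X_{1..k} := [multinom m (widen i) | i < k].

Lemma mnm_rcons_widen g l i : mnm_rcons g l (widen i) = g i.
Proof.
rewrite /mnm_rcons mnmDE mnmwiden_widen mulmnE mnm1E.
have -> : (ord_max == widen i :> 'I_k.+1) = false.
  by apply/negbTE; rewrite -val_eqE /= neq_ltn ltn_ord orbT.
by rewrite mul0n addn0.
Qed.

Lemma mnm_rcons_max g l : mnm_rcons g l ord_max = l.
Proof. by rewrite /mnm_rcons mnmDE mnmwiden_ordmax mulmnE mnm1E eqxx mul1n. Qed.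

Lemma mnm_rconsK g l : mnm_trunc (mnm_rcons g l) = g.
Proof. by apply/mnmP => i; rewrite mnmE mnm_rcons_widen. Qed.

Lemma mnm_truncK m : mnm_rcons (mnm_trunc m) (m ord_max) = m.
Proof.
apply/mnmP => i; have [ik|ki] := ltnP i k.
  have -> : i = widen (Ordinal ik) by apply: val_inj.
  by rewrite mnm_rcons_widen mnmE.
have -> : i = ord_max.
  by apply: val_inj; apply/eqP; rewrite /= eqn_leq ki andbT -ltnS ltn_ord.
by rewrite mnm_rcons_max.
Qed.

Lemma eq_mnm_rcons m g l :
  (m == mnm_rcons g l) = (mnm_trunc m == g) && (m ord_max == l).
Proof.
apply/eqP/andP => [->|[/eqP <- /eqP <-]]; last by rewrite mnm_truncK.
by rewrite mnm_rconsK mnm_rcons_max.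
Qed.

Lemma mdeg_mnm_rcons g l : mdeg (mnm_rcons g l) = (mdeg g + l)%N.
Proof.
rewrite mdegE big_ord_recr /= mnm_rcons_max; congr (_ + _)%N.
by rewrite mdegE; apply: eq_bigr => i _; rewrite mnm_rcons_widen.
Qed.

Lemma mnm_trunc_mdeg_inj m m' :
  mnm_trunc m = mnm_trunc m' -> mdeg m = mdeg m' -> m = m'.
Proof.
move=> eq_tr eq_deg; rewrite -(mnm_truncK m) -(mnm_truncK m') eq_tr; congr mnm_rcons.
apply/eqP; rewrite -(eqn_add2l (mdeg (mnm_trunc m'))) -!mdeg_mnm_rcons.
by rewrite -{1}eq_tr !mnm_truncK eq_deg.
Qed.

Definition w_init (i : 'I_k.+1) : nat := i != ord_max.
Definition w_last (i : 'I_k.+1) : nat := i == ord_max.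

Lemma wdeg_init_rcons g l : wdeg w_init (mnm_rcons g l) = mdeg g.
Proof.
rewrite /wdeg big_ord_recr /= /w_init eqxx muln0 addn0 mdegE.
by apply: eq_bigr => i _; rewrite mnm_rcons_widen -val_eqE /= ltn_eqF // muln1.
Qed.

Lemma wdeg_last_rcons g l : wdeg w_last (mnm_rcons g l) = l.
Proof.
rewrite /wdeg big_ord_recr /= /w_last eqxx muln1 mnm_rcons_max big1 // => i _.
by rewrite -val_eqE /= ltn_eqF // muln0.
Qed.

Lemma w_init_max : w_init ord_max = 0%N. Proof. by rewrite /w_init eqxx. Qed.
Lemma w_last_max : w_last ord_max = 1%N. Proof. by rewrite /w_last eqxx. Qed.

Lemma lift_max_neq (j : 'I_k) : (lift ord_max j == ord_max) = false.
Proof. by rewrite lift_ord_max -val_eqE /= ltn_eqF. Qed.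

Lemma w_init_lift (j : 'I_k) : w_init (lift ord_max j) = 1%N.
Proof. by rewrite /w_init lift_max_neq. Qed.

Lemma w_last_lift (j : 'I_k) : w_last (lift ord_max j) = 0%N.
Proof. by rewrite /w_last lift_max_neq. Qed.

Lemma mcoeff_muni (p : {mpoly K[k.+1]}) l g : ((muni p)`_l)@_g = p@_(mnm_rcons g l).
Proof.
rewrite muniE coef_sum raddf_sum [p in RHS]mpolyE raddf_sum /=; apply: eq_bigr => m _.
rewrite coefZ coefXn [in RHS]mcoeffZ [in RHS]mcoeffX eq_mnm_rcons.
case: (l =P m ord_max) => [->|ne]; last first.
  rewrite mulr0 mcoeff0 andbC.
  by case: eqP => [e|]; [case: ne; rewrite e|rewrite mulr0].
by rewrite eqxx mulr1 mcoeffZ mcoeffX andbT.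
Qed.

Lemma muni_Xwiden (j : 'I_k) : muni ('X_(widen j) : {mpoly K[k.+1]}) = ('X_j)%:P.
Proof.
rewrite muniE msuppX big_seq1 mcoeffX eqxx scale1r mnm1E.
have -> : (widen j == ord_max :> 'I_k.+1) = false.
  by apply/negbTE; rewrite -val_eqE /= neq_ltn ltn_ord.
rewrite expr0 -mul_polyC mulr1; congr (_%:P); congr ('X_[_]); apply/mnmP => i.
by rewrite mnmE !mnm1E -val_eqE /= val_eqE.
Qed.

Lemma muni_Xmax : muni ('X_ord_max : {mpoly K[k.+1]}) = 'X.
Proof.
rewrite muniE msuppX big_seq1 mcoeffX eqxx scale1r (mnm1E ord_max ord_max) eqxx expr1.
have -> : [multinom U_(ord_max : 'I_k.+1)%MM (widen i) | i < k] = 0%MM.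
  apply/mnmP => i; rewrite mnmE mnm0E (mnm1E ord_max).
  by apply/eqP; rewrite eqb0 -val_eqE /= neq_ltn ltn_ord orbT.
by rewrite mpolyX0 scale1r.
Qed.

End LastVariable.

Arguments w_init {k} i.
Arguments w_last {k} i.

Section Translation.
Variable K : fieldType.
Local Notation widen := (widen_ord (leqnSn _)).

Definition mshift k (a : 'I_k -> K) (i : 'I_k) : {mpoly K[k]} := 'X_i + (a i)%:MP.

Definition mvanish k r (a : 'I_k -> K) (g : {mpoly K[k]}) :=
  forall b, (mdeg b < r)%N -> (msubst (mshift a) g)@_b = 0.

Lemma mvanishP k r (a : 'I_k -> K) g :
  mvanish r a g <-> wdeg_ge (fun _ => 1%N) r (msubst (mshift a) g).
Proof.
split=> [hg m|hg b hb]; last by apply: wdeg_ge_coef hg _; rewrite wdeg1.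
rewrite mcoeff_msupp unfold_in /= wdeg1 => /eqP nz0.
by rewrite leqNgt; apply/negP => /hg.
Qed.

Definition frcons k (a : 'I_k -> K) (x : K) (i : 'I_k.+1) : K :=
  if unlift ord_max i is Some j then a j else x.

Lemma frcons_widen k (a : 'I_k -> K) x j : frcons a x (widen j) = a j.
Proof. by rewrite -lift_ord_max /frcons liftK. Qed.

Lemma frcons_max k (a : 'I_k -> K) x : frcons a x ord_max = x.
Proof. by rewrite /frcons unlift_none. Qed.

Lemma map_mcoeff_comp_poly k (P : {poly {mpoly K[k]}}) (q : {poly K}) g :
  map_poly (mcoeff g) (P \Po map_poly (@mpolyC k K) q) = map_poly (mcoeff g) P \Po q.
Proof.
apply/polyP => n.
rewrite coef_map_id0 ?mcoeff0 // (coef_comp_poly_wide _ _ (leqnn (size P))).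
rewrite (coef_comp_poly_wide _ _ (size_poly _ _)) raddf_sum /=.
apply: eq_bigr => i _; rewrite -rmorphXn coef_map /= mulrC mcoeffCM.
by rewrite coef_map_id0 ?mcoeff0 // mulrC.
Qed.

Lemma muni_msubst_mshift k (a : 'I_k -> K) x (p : {mpoly K[k.+1]}) :
  muni (msubst (mshift (frcons a x)) p) =
  map_poly (msubst (mshift a)) (muni p) \Po map_poly (@mpolyC k K) ('X + x%:P).
Proof.
move: p; apply: mpoly_morph_eq => [p q|p q|p q|p q|c|i].
- by rewrite rmorphD muniD.
- by rewrite muniD [X in X \Po _]rmorphD comp_polyD.
- by rewrite rmorphM muniM.
- by rewrite muniM [X in X \Po _]rmorphM comp_polyM.
- by rewrite comp_mpolyC muniC map_polyC /= comp_mpolyC comp_polyC.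
rewrite msubstX /mshift; case: (unliftP ord_max i) => [j ->|->].
  rewrite lift_ord_max frcons_widen muniD muni_Xwiden muniC map_polyC /=.
  by rewrite msubstX /mshift comp_polyC rmorphD.
rewrite frcons_max muniD muni_Xmax muniC map_polyX comp_polyX.
by rewrite rmorphD /= map_polyX map_polyC.
Qed.

Lemma mvanish_muni_coef k r (a : 'I_k -> K) (xs : seq K) (g : {mpoly K[k.+1]}) t b :
  uniq xs -> (size (muni g) <= t.+1)%N -> (t < size xs * (r - mdeg b))%N ->
  (forall x, x \in xs -> mvanish r (frcons a x) g) ->
  (msubst (mshift a) (muni g)`_t)@_b = 0.
Proof.
move=> xs_uniq size_g t_lt g_vanish.
set H := map_poly (mcoeff b) (map_poly (msubst (mshift a)) (muni g)).
have -> : (msubst (mshift a) (muni g)`_t)@_b = H`_t.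
  by rewrite /H coef_map_id0 ?mcoeff0 // coef_map.
suff -> : H = 0 by rewrite coef0.
apply: (poly_mult_roots_eq0 _ xs_uniq t_lt).
  apply/leq_sizeP => j hj; rewrite /H coef_map_id0 ?mcoeff0 // coef_map /=.
  by rewrite nth_default ?rmorph0 ?mcoeff0 // (leq_trans size_g hj).
move=> x /g_vanish hg l hl; rewrite -map_mcoeff_comp_poly -muni_msubst_mshift.
by rewrite coef_map_id0 ?mcoeff0 // mcoeff_muni hg // mdeg_mnm_rcons -ltn_subRL.
Qed.

End Translation.

Section GridVanishing.
Variables (K : fieldType) (N : nat) (A : nat -> seq K).
Hypothesis N_gt0 : (0 < N)%N.

Lemma grid_mvanish_eq0 k r (g : {mpoly K[k]}) :
  (forall j, (j < k)%N -> uniq (A j)) -> (forall j, (j < k)%N -> size (A j) = N) ->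
  (msize g <= r * N)%N ->
  (forall a : 'I_k -> K, (forall i : 'I_k, a i \in A i) -> mvanish r a g) ->
  g = 0.
Proof.
elim: k r g => [|k IH] r g A_uniq size_A sg hgrid.
  case: r sg hgrid => [|r] sg hgrid.
    by apply/eqP; rewrite -msize_poly_eq0 -leqn0.
  have ha (i : 'I_0) : (fun _ => 0 : K) i \in A i by case: i.
  have := hgrid _ ha 0%MM; rewrite mdeg0 => /(_ isT).
  rewrite [g in msubst _ g](nvar0_mpolyC g) comp_mpolyC mcoeffC eqxx mulr1 => g0.
  by rewrite (nvar0_mpolyC g) g0 mpolyC0.
apply/eqP; apply: contraT => gn0; set P := muni g.
have coefP l b : (P`_l)@_b = g@_(mnm_rcons b l) by rewrite mcoeff_muni.
have Pn0 : P != 0.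
  apply: contraNneq gn0 => P0; apply/eqP/mpolyP => m.
  by rewrite mcoeff0 -(mnm_truncK m) -coefP P0 coef0 mcoeff0.
set t := (size P).-1; set gt := P`_t.
have gtn0 : gt != 0 by rewrite /gt /t -lead_coefE lead_coef_eq0.
have deg_gt b : b \in msupp gt -> (mdeg b + t < r * N)%N.
  rewrite mcoeff_msupp coefP -mcoeff_msupp => /msize_mdeg_lt.
  by rewrite mdeg_mnm_rcons => /leq_trans; apply.
have tN : (t < r * N)%N.
  by apply: leq_ltn_trans (deg_gt _ (mlead_supp gtn0)); rewrite leq_addl.
set s := (t %/ N)%N.
have sN : (s * N <= t)%N := leq_divM t N.
have tsN : (t < s.+1 * N)%N := ltn_ceil t N_gt0.
have sr : (s < r)%N by rewrite -(ltn_pmul2r N_gt0); apply: leq_ltn_trans sN tN.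
suff /eqP : gt = 0 by rewrite (negPf gtn0).
apply: (IH (r - s)%N).
- by move=> j /ltnW; apply: A_uniq.
- by move=> j /ltnW; apply: size_A.
- rewrite msizeE; apply/bigmax_leqP_seq => b /deg_gt + _.
  by rewrite mulnBl; lia.
move=> a ha b hb; apply: (mvanish_muni_coef (r := r) (xs := A k)).
- exact: A_uniq.
- by rewrite /t; case: (size P).
- rewrite size_A // (leq_trans tsN) // mulnC leq_pmul2l //.
  by rewrite ltn_subRL addnC -ltn_subRL.
move=> x xA; apply: hgrid => i.
case: (unliftP ord_max i) => [j ->|->]; last by rewrite frcons_max.
by rewrite lift_ord_max frcons_widen /= ha.
Qed.

End GridVanishing.

Section LineRestriction.
Variables (K : fieldType) (k : nat).
Local Notation t := ('X_ord_max : {mpoly K[k.+1]}).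
Implicit Types (a c : 'I_k -> K) (f : {mpoly K[k.+1]}).

(* With the last variable written [t] and the others [y], substituting along
   these maps turns [f] into [f(c + t (a + y), t)], [f(c + t a + y, t)],
   [f(t y, t)], [f(y, t + mu)] and [f(y + t a, t)] respectively. *)
Definition line_subst a c (i : 'I_k.+1) : {mpoly K[k.+1]} :=
  if unlift ord_max i is Some j then (c j)%:MP + t * ('X_i + (a j)%:MP) else t.
Definition affine_subst a c (i : 'I_k.+1) : {mpoly K[k.+1]} :=
  if unlift ord_max i is Some j then (c j)%:MP + (a j)%:MP * t + 'X_i else t.
Definition scale_subst (i : 'I_k.+1) : {mpoly K[k.+1]} :=
  if unlift ord_max i is Some j then t * 'X_i else t.
Definition shift_last (mu : K) (i : 'I_k.+1) : {mpoly K[k.+1]} :=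
  if unlift ord_max i is Some j then 'X_i else t + mu%:MP.
Definition shear_subst a (i : 'I_k.+1) : {mpoly K[k.+1]} :=
  if unlift ord_max i is Some j then (a j)%:MP * t + 'X_i else t.

Definition line_point a c (mu : K) : 'I_k.+1 -> K := frcons (fun j => c j + mu * a j) mu.

Lemma muni_shift_last mu f :
  muni (msubst (shift_last mu) f) = muni f \Po map_poly (@mpolyC k K) ('X + mu%:P).
Proof.
move: f; apply: mpoly_morph_eq => [p q|p q|p q|p q|c|i].
- by rewrite rmorphD muniD.
- by rewrite muniD comp_polyD.
- by rewrite rmorphM muniM.
- by rewrite muniM comp_polyM.
- by rewrite comp_mpolyC muniC comp_polyC.
rewrite msubstX /shift_last; case: (unliftP ord_max i) => [j ->|->].
  by rewrite ?liftK lift_ord_max muni_Xwiden comp_polyC.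
rewrite ?unlift_none muniD muni_Xmax muniC comp_polyX.
by rewrite rmorphD /= map_polyX map_polyC.
Qed.

Lemma shift_last_affine_subst a c mu f :
  msubst (shift_last mu) (msubst (affine_subst a c) f) =
  msubst (shear_subst a) (msubst (mshift (line_point a c mu)) f).
Proof.
rewrite !msubst_comp; apply: eq_msubst => i.
rewrite /affine_subst /mshift /line_point /frcons.
case: (unliftP ord_max i) => [j ->|->]; last first.
  by rewrite ?unlift_none rmorphD /= !msubstX comp_mpolyC /shift_last /shear_subst ?unlift_none.
rewrite ?liftK !rmorphD rmorphM /= !msubstX /shift_last /shear_subst ?liftK ?unlift_none.
by rewrite !comp_mpolyC mpolyCM; ring.
Qed.

Lemma line_subst_scale_subst a c f :
  msubst (line_subst a c) f = msubst scale_subst (msubst (affine_subst a c) f).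
Proof.
rewrite msubst_comp; apply: eq_msubst => i.
rewrite /affine_subst /line_subst; case: (unliftP ord_max i) => [j ->|_].
  rewrite ?liftK !rmorphD rmorphM /= !msubstX /scale_subst ?liftK ?unlift_none.
  by rewrite !comp_mpolyC; ring.
by rewrite ?unlift_none msubstX /scale_subst ?unlift_none.
Qed.

End LineRestriction.

Section LineVanishing.
Variables (K : fieldType) (k : nat) (f : {mpoly K[k.+1]}) (e m r N : nat).
Variables (a c : 'I_k -> K) (mus : seq K).
Local Notation one := (fun _ : 'I_k.+1 => 1%N).
Hypotheses (size_f : (msize f <= e.+1)%N) (mus_uniq : uniq mus) (size_mus : size mus = N).
Hypothesis f_vanish : forall mu, mu \in mus -> mvanish m (line_point a c mu) f.
Hypothesis deg_small : forall j, (j < r)%N -> (e < N * (m - j))%N.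

(* In [f(c + t a + y, t)] the coefficient of [y^g] is a polynomial in [t] of
   degree at most [e] vanishing to order [m - |g|] at each [mu] in [mus], so it
   is zero when [|g| < r]. *)
Lemma affine_subst_wdeg_init : wdeg_ge w_init r (msubst (affine_subst a c) f).
Proof.
set R := msubst (affine_subst a c) f.
have degR : wdeg_le one e R.
  apply: (msubst_wdeg_le (msize_wdeg_le size_f)) => i; rewrite /affine_subst.
  case: (unliftP ord_max i) => [j ->|_]; rewrite ?liftK ?unlift_none; last exact: wdeg_leXU.
  apply: msupp_subD; last exact: wdeg_leXU.
  apply: msupp_subD; first exact: wdeg_leC.
  by rewrite -[1%N]/(0 + 1)%N; apply: wdeg_leM; [apply: wdeg_leC|apply: wdeg_leXU].
have R0 g l : (mdeg g < r)%N -> R@_(mnm_rcons g l) = 0.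
  move=> hg; set h := map_poly (mcoeff g) (muni R).
  suff /(congr1 (fun p : {poly K} => p`_l)) : h = 0.
    by rewrite /h coef_map_id0 ?mcoeff0 // mcoeff_muni coef0.
  apply: (@poly_mult_roots_eq0 _ _ e (m - mdeg g) mus) => //.
  - apply/leq_sizeP => j hj; rewrite /h coef_map_id0 ?mcoeff0 // mcoeff_muni.
    apply: (wdeg_le_coef degR).
    by rewrite wdeg1 mdeg_mnm_rcons (leq_trans hj) // leq_addl.
  - by rewrite size_mus; apply: deg_small.
  move=> mu /f_vanish /mvanishP hmu l2 hl.
  rewrite /h -map_mcoeff_comp_poly -muni_shift_last coef_map_id0 ?mcoeff0 //.
  rewrite mcoeff_muni /R shift_last_affine_subst.
  apply: (wdeg_ge_coef (w := one) (j := m)); last by rewrite wdeg1 mdeg_mnm_rcons -ltn_subRL.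
  apply: (msubst_wdeg_ge hmu) => i; rewrite /shear_subst.
  case: (unliftP ord_max i) => [j ->|_]; rewrite ?liftK ?unlift_none; last exact: wdeg_geXU.
  apply: msupp_subD; last exact: wdeg_geXU.
  by rewrite -[1%N]/(0 + 1)%N; apply: wdeg_geM; [apply: wdeg_ge0|apply: wdeg_geXU].
move=> mono; rewrite mcoeff_msupp -(mnm_truncK mono) unfold_in /= wdeg_init_rcons.
by apply: contraR; rewrite -ltnNge => /R0 ->.
Qed.

Lemma coef_line_subst_eq0 b :
  (mdeg b < r)%N -> (msubst (line_subst a c) f)@_(mnm_rcons b e) = 0.
Proof.
move=> hb; rewrite line_subst_scale_subst.
apply: (wdeg_ge_coef (w := w_init) (j := r)); last by rewrite wdeg_init_rcons.
apply: (msubst_wdeg_ge affine_subst_wdeg_init) => i; rewrite /scale_subst.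
case: (unliftP ord_max i) => [j ->|->]; rewrite ?liftK ?unlift_none.
  rewrite -[w_init _]/(0 + w_init (lift ord_max j))%N.
  by apply: wdeg_geM; [apply: wdeg_ge0|apply: wdeg_geXU].
by rewrite w_init_max; apply: wdeg_ge0.
Qed.

End LineVanishing.

Section DehomogenisedTopForm.
Variables (K : fieldType) (k : nat).
Local Notation widen := (widen_ord (leqnSn _)).
Local Notation t := ('X_ord_max : {mpoly K[k.+1]}).
Local Notation zero := (fun _ : 'I_k => 0 : K).
Implicit Types (f : {mpoly K[k.+1]}) (a c : 'I_k -> K).

(* [f(t y, t) = \sum_e t^e f_e(y, 1)] where [f_e] is the homogeneous part of
   degree [e] of [f]; [dehomog f e] is [y |-> f_e(y, 1)]. *)
Definition dehomog f e : {mpoly K[k]} := (muni (msubst (@scale_subst K k) f))`_e.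

Lemma mcoeff_dehomog f e b :
  (dehomog f e)@_b = (msubst (@scale_subst K k) f)@_(mnm_rcons b e).
Proof. exact: mcoeff_muni. Qed.

Lemma msubst_mshift_dehomog f e a :
  msubst (mshift a) (dehomog f e) = (muni (msubst (line_subst a zero) f))`_e.
Proof.
suff <- : map_poly (msubst (mshift a)) (muni (msubst (@scale_subst K k) f)) =
          muni (msubst (line_subst a zero) f) by rewrite coef_map.
move: f; apply: mpoly_morph_eq => [p q|p q|p q|p q|c|i].
- by rewrite !(rmorphD, muniD).
- by rewrite !(rmorphD, muniD).
- by rewrite !(rmorphM, muniM).
- by rewrite !(rmorphM, muniM).
- by rewrite !comp_mpolyC muniC map_polyC /= comp_mpolyC.
rewrite !msubstX /scale_subst /line_subst; case: (unliftP ord_max i) => [j ->|_].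
  rewrite !mpolyC0 !add0r !(muniM, muniD, muniC) muni_Xmax lift_ord_max muni_Xwiden.
  by rewrite rmorphM /= map_polyX map_polyC /= msubstX /mshift polyCD.
by rewrite muni_Xmax map_polyX.
Qed.

Lemma line_subst_coef_indep f e a c b : (msize f <= e.+1)%N ->
  (msubst (line_subst a c) f)@_(mnm_rcons b e) =
  (msubst (line_subst a zero) f)@_(mnm_rcons b e).
Proof.
move=> /msize_wdeg_le degf; apply/eqP; rewrite -subr_eq0 -mcoeffB; apply/eqP.
apply: (wdeg_lt_coef (w := w_last) (j := e)); last by rewrite wdeg_last_rcons.
rewrite !msubstE -sumrB; apply: msupp_sub_sum => m.
have [mf|mNf] := boolP (m \in msupp f); last first.
  by rewrite memN_msupp_eq0 // !scale0r subrr; apply: msupp_sub0.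
rewrite -scalerBr; apply: msupp_subZ; apply: (wdeg_lt_trans (degf _ mf)).
have deg_line c' i : wdeg_le w_last 1%N (line_subst a c' i).
  rewrite /line_subst; case: (unliftP ord_max i) => [j ->|_]; last first.
    by rewrite -(w_last_max k); apply: wdeg_leXU.
  apply: msupp_subD; first exact: wdeg_leC.
  rewrite -[1%N]/(1 + 0)%N; apply: wdeg_leM; first by rewrite -(w_last_max k); apply: wdeg_leXU.
  apply: msupp_subD; last exact: wdeg_leC.
  by rewrite -(w_last_lift j); apply: wdeg_leXU.
apply: wdeg_lt_prodB => // i; rewrite /line_subst.
case: (unliftP ord_max i) => [j ->|_]; last by rewrite subrr; apply: msupp_sub0.
by rewrite mpolyC0 add0r addrK; apply: wdeg_ltC.
Qed.

Lemma scale_substX (m : 'X_{1..k.+1}) :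
  msubst (@scale_subst K k) 'X_[m] = 'X_[mnm_rcons (mnm_trunc m) (mdeg m)].
Proof.
rewrite msubstXm [RHS]mpolyXE_id !big_ord_recr /= mnm_rcons_max.
have -> : \prod_(j < k) scale_subst K (widen j) ^+ m (widen j) =
    t ^+ (\sum_(j < k) m (widen j)) * \prod_(j < k) 'X_(widen j) ^+ m (widen j).
  rewrite -prodrXr -big_split /=; apply: eq_bigr => j _.
  by rewrite /scale_subst -lift_ord_max liftK exprMn.
under [in RHS]eq_bigr => j _ do rewrite mnm_rcons_widen mnmE.
by rewrite [mdeg m]mdegE big_ord_recr exprD /= /scale_subst unlift_none; ring.
Qed.

Lemma dehomog_neq0 f : f != 0 -> dehomog f (msize f).-1 != 0.
Proof.
move=> fn0; have alf := mlead_supp fn0; set al := mlead f in alf *.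
have dal : mdeg al = (msize f).-1 by rewrite -mlead_deg.
apply: contraTneq (alf) => /(congr1 (mcoeff (mnm_trunc al))).
rewrite mcoeff0 mcoeff_dehomog msubstE.
under eq_bigr => m _ do rewrite -msubstXm scale_substX.
rewrite raddf_sum /= (bigD1_seq al) ?msupp_uniq //=.
rewrite mcoeffZ mcoeffX -dal eqxx mulr1 big1 ?addr0 => [|m mal].
  by move=> f0; rewrite mcoeff_msupp f0 eqxx.
rewrite mcoeffZ mcoeffX; case: eqP => [E|]; last by rewrite mulr0.
case/eqP: mal; apply: mnm_trunc_mdeg_inj.
  by have := congr1 (@mnm_trunc k) E; rewrite !mnm_rconsK.
by have := congr1 (fun x : 'X_{1..k.+1} => x ord_max) E; rewrite !mnm_rcons_max.
Qed.

Lemma msize_dehomog f e : (msize f <= e.+1)%N -> (msize (dehomog f e) <= e.+1)%N.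
Proof.
move=> /msize_wdeg_le degf; apply: wdeg_le_msize => b.
rewrite mcoeff_msupp mcoeff_dehomog unfold_in /= wdeg1.
apply: contraR; rewrite -ltnNge => hb; apply/eqP.
apply: (wdeg_le_coef (w := w_init) (j := e)); last by rewrite wdeg_init_rcons.
apply: (msubst_wdeg_le degf) => i; rewrite /scale_subst.
case: (unliftP ord_max i) => [j ->|_]; rewrite ?liftK ?unlift_none; last first.
  by apply: (wdeg_le_trans (a := 0%N)) => //; rewrite -(w_init_max k); apply: wdeg_leXU.
rewrite -(w_init_lift j) -[w_init _]/(0 + w_init _)%N; apply: wdeg_leM; last exact: wdeg_leXU.
by rewrite -(w_init_max k); apply: wdeg_leXU.
Qed.

Lemma dehomog_mvanish f e m r N a c (mus : seq K) :
  (msize f <= e.+1)%N -> uniq mus -> size mus = N ->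
  (forall mu, mu \in mus -> mvanish m (line_point a c mu) f) ->
  (forall j, (j < r)%N -> (e < N * (m - j))%N) ->
  mvanish r a (dehomog f e).
Proof.
move=> size_f mus_uniq size_mus f_vanish deg_small b hb.
rewrite msubst_mshift_dehomog mcoeff_muni -(@line_subst_coef_indep f e a c b) //.
exact: (coef_line_subst_eq0 size_f mus_uniq size_mus f_vanish deg_small hb).
Qed.

End DehomogenisedTopForm.

Lemma card_bmnm k b : #|{: 'X_{1..k.+1 < b.+1}}| = 'C(b + k.+1, k.+1).
Proof.
have -> : 'C(b + k.+1, k.+1) = 'C(b + k.+1, b).
  by rewrite -[in RHS]bin_sub ?leq_addr // addKn.
rewrite -(size_basis k.+1 b) cardE.
pose phi (m : 'X_{1..k.+1 < b.+1}) : 'X_{1..k.+2} := mnm_rcons (val m) (b - mdeg (val m)).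
rewrite -(size_map phi); apply: perm_size; apply: uniq_perm.
- rewrite map_inj_uniq ?enum_uniq // => m1 m2 /(congr1 (@mnm_trunc _)).
  by rewrite !mnm_rconsK => /val_inj.
- exact: uniq_basis.
move=> x; rewrite -basis_cover; apply/mapP/eqP => [[m _ ->]|dx].
  by rewrite mdeg_mnm_rcons subnKC // -ltnS bmdeg.
have hb : (mdeg (mnm_trunc x) < b.+1)%N.
  by rewrite ltnS -dx -{2}(mnm_truncK x) mdeg_mnm_rcons leq_addr.
exists (BMultinom hb); first by rewrite mem_enum.
rewrite /phi /= -{1}(mnm_truncK x); congr mnm_rcons.
by rewrite -dx -[in mdeg x](mnm_truncK x) mdeg_mnm_rcons addKn.
Qed.

Lemma mvanish_ext (K : fieldType) k r (a a' : 'I_k -> K) g :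
  a =1 a' -> mvanish r a g -> mvanish r a' g.
Proof.
move=> eq_a hg b hb; rewrite -(hg b hb); congr _@__; apply: eq_msubst => i.
by rewrite /mshift eq_a.
Qed.

(* Each point imposes [#|'X_{1..n < m}|] linear conditions on the
   [#|'X_{1..n < d}|] coefficients of [f]. *)
Lemma exists_mvanish_mpoly (K : fieldType) n d m (S : seq 'rV[K]_n) :
  (size S * #|{: 'X_{1..n < m}}| < #|{: 'X_{1..n < d}}|)%N ->
  exists2 f : {mpoly K[n]}, f != 0 &
    (msize f <= d)%N /\ forall x, x \in S -> mvanish m (fun i => x ord0 i) f.
Proof.
move=> card_lt.
pose V := 'X_{1..n < d}; pose W := ('I_(size S) * 'X_{1..n < m})%type.
pose M : 'M[K]_(#|{: V}|, #|{: W}|) := \matrix_(i, j)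
  (msubst (mshift (fun l => (nth 0 S (enum_val j : W).1) ord0 l))
     'X_[val (enum_val i : V)])@_(val (enum_val j : W).2).
pose u := nz_row (kermx M).
have un0 : u != 0.
  rewrite nz_row_eq0 -mxrank_eq0 mxrank_ker subn_eq0 -ltnNge.
  by apply: leq_ltn_trans (rank_leq_col M) _; rewrite card_prod card_ord.
have uM : u *m M = 0 by apply/sub_kermxP; exact: nz_row_sub.
pose f : {mpoly K[n]} := \sum_(i < #|{: V}|) u 0 i *: 'X_[val (enum_val i : V)].
have coef_f i : f@_(val (enum_val i : V)) = u 0 i.
  rewrite raddf_sum /= (bigD1 i) //= mcoeffZ mcoeffX eqxx mulr1 big1 ?addr0 // => j ji.
  rewrite mcoeffZ mcoeffX; case: eqP => [/val_inj/enum_val_inj E|]; last by rewrite mulr0.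
  by rewrite E eqxx in ji.
exists f; last split.
- apply: contraNneq un0 => f0; apply/eqP/rowP => i.
  by rewrite -coef_f f0 mcoeff0 mxE.
- rewrite msizeE; apply/bigmax_leqP_seq => b /msupp_sum_le/flattenP[_ /mapP[i _ ->]].
  by move=> /msuppZ_le; rewrite msuppX inE => /eqP -> _; apply: bmdeg.
move=> x xS b hb.
have hs : (index x S < size S)%N by rewrite index_mem.
pose j := enum_rank ((Ordinal hs, BMultinom hb) : W).
have := congr1 (fun A : 'M[K]_(1, #|{: W}|) => A 0 j) uM.
rewrite !mxE => <-; rewrite /f rmorph_sum /= raddf_sum /=; apply: eq_bigr => i _.
by rewrite comp_mpolyZ mcoeffZ mxE enum_rankK /= nth_index.
Qed.

Lemma grid_lines_bound (K : fieldType) k N r (A : nat -> seq K) (S : seq 'rV[K]_k.+1) :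
  (0 < N)%N -> (0 < r)%N ->
  (forall j, (j < k)%N -> uniq (A j)) -> (forall j, (j < k)%N -> size (A j) = N) ->
  (forall a : 'I_k -> K, (forall i : 'I_k, a i \in A i) ->
    exists c : 'I_k -> K, exists2 mus : seq K, uniq mus /\ size mus = N &
      forall mu, mu \in mus -> \row_i line_point a c mu i \in S) ->
  ('C(r * N + k, k.+1) <= 'C(2 * r + k - 1, k.+1) * size S)%N.
Proof.
move=> N_gt0 r_gt0 A_uniq size_A lines; rewrite leqNgt; apply/negP => card_lt.
have [f fn0 [size_f f_vanish]] : exists2 f : {mpoly K[k.+1]}, f != 0 &
    (msize f <= r * N)%N /\ forall x, x \in S -> mvanish (2 * r).-1 (fun i => x ord0 i) f.
  have rN_gt0 : (0 < r * N)%N by rewrite muln_gt0 r_gt0.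
  have -> : (r * N = (r * N).-1.+1)%N by rewrite prednK.
  have -> : ((2 * r).-1 = (2 * r - 2).+1)%N by lia.
  apply: exists_mvanish_mpoly; rewrite !card_bmnm mulnC.
  have -> : (2 * r - 2 + k.+1 = 2 * r + k - 1)%N by lia.
  by rewrite addnS -addSn prednK.
set e := (msize f).-1.
have size_fe : (msize f <= e.+1)%N by rewrite /e; case: (msize f).
have e_lt : (e < r * N)%N.
  by move: size_f; rewrite /e; case: (msize f) => [_|s]; rewrite ?muln_gt0 ?r_gt0.
apply/negP: (dehomog_neq0 fn0); rewrite negbK; apply/eqP.
apply: (grid_mvanish_eq0 N_gt0 (r := r) A_uniq size_A).
  exact: leq_trans (msize_dehomog size_fe) e_lt.
move=> a /lines [c [mus [mus_uniq size_mus] mus_S]].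
apply: (dehomog_mvanish (m := (2 * r).-1) (N := N) (c := c) (mus := mus)) => //.
  move=> mu /mus_S /f_vanish; apply: mvanish_ext => i; exact: mxE.
move=> j lt_jr; apply: leq_trans e_lt _; rewrite mulnC leq_mul2l; apply/orP; right; lia.
Qed.

Lemma line_points_in_coordinates (K : fieldType) k N (B : 'M[K]_k.+1)
    (S : {fset 'rV[K]_k.+1}) (uv : 'rV[K]_k.+1 * 'rV[K]_k.+1) (a : 'I_k -> K) (c0 : K) :
  B \in unitmx -> c0 != 0 -> (\row_i frcons a 1 i) *m B = c0 *: uv.2 ->
  incident_atleast N S uv ->
  exists c : 'I_k -> K, exists2 mus : seq K, uniq mus /\ size mus = N &
    forall mu, mu \in mus -> \row_i line_point a c mu i \in [seq x *m invmx B | x <- S].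
Proof.
move=> B_unit c0n0 dir [T [TS NT Ton]].
set av := \row_i frcons a 1 i in dir; set w := uv.1 *m invmx B.
have v_eq : uv.2 *m invmx B = c0^-1 *: av.
  have -> : uv.2 = c0^-1 *: (av *m B) by rewrite dir scalerA mulVf // scale1r.
  by rewrite -scalemxAl mulmxK.
have coords x : x \in T -> x *m invmx B =
    \row_i line_point a (fun j => w 0 (lift ord_max j) - w 0 ord_max * a j)
                        ((x *m invmx B) 0 ord_max) i.
  move=> /Ton[lam ->]; rewrite mulmxDl -scalemxAl v_eq; apply/rowP => i.
  rewrite !mxE /line_point /frcons /w; case: (unliftP ord_max i) => [j ->|->].
    by rewrite unlift_none !mxE; ring.
  by rewrite unlift_none; ring.
exists (fun j => w 0 (lift ord_max j) - w 0 ord_max * a j).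
exists (take N [seq (x *m invmx B) 0 ord_max | x <- enum_fset T]).
  split; last by rewrite size_takel // size_map.
  apply: take_uniq; rewrite map_inj_in_uniq ?fset_uniq // => x x' xT x'T eq_last.
  apply: (can_inj (mulmxKV B_unit)).
  by rewrite coords // (coords x') // eq_last.
move=> mu /mem_take /mapP [x xT ->]; rewrite -coords //.
by apply: map_f; move/fsubsetP: TS; apply.
Qed.

Unset Implicit Arguments.

Theorem theorem3p2 (K : fieldType) (n N : nat)
  (L : 'rV[K]_n * 'rV[K]_n -> Prop) (S : {fset 'rV[K]_n}) :
  (2 <= n)%N -> (0 < N)%N ->
  (forall uv, L uv -> (snd uv) != 0) ->
  (forall uv, L uv -> incident_atleast N S uv) ->
  contains_grid N (direction_set L) ->
  forall r : nat, (0 < r)%N ->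
  ('C(r * N + n - 1, n) <= 'C(2 * r + n - 2, n) * #|` S|)%N.
Proof.
case: n L S => [|k] L S // _ N_gt0 _ incid [B [A [B_unit size_A grid]]] r r_gt0.
have -> : (r * N + k.+1 - 1 = r * N + k)%N by lia.
have -> : (2 * r + k.+1 - 2 = 2 * r + k - 1)%N by lia.
rewrite -[#|` S|](size_map (mulmx^~ (invmx B))).
pose A' j : seq K := enum_fset (A (inord j)).
have A'_uniq j : uniq (A' j) by apply: fset_uniq.
have size_A' j : (j < k)%N -> size (A' j) = N.
  by move=> lt_jk; rewrite size_A // inordK // ltnW.
apply: (grid_lines_bound N_gt0 r_gt0 (fun j _ => A'_uniq j) size_A') => a a_grid.
have : direction_set L (\row_i frcons a 1 i *m B).
  apply: grid => i; rewrite mxE /frcons; last first.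
    move=> eq_ik; have -> : i = ord_max by apply: val_inj.
    by rewrite unlift_none.
  case: (unliftP ord_max i) => [j -> _|->]; last by rewrite /= ltnn.
  have -> : lift ord_max j = inord j.
    by rewrite lift_ord_max; apply: val_inj; rewrite /= inordK // (leq_trans (ltn_ord j)).
  exact: a_grid.
case=> uv [Luv [c0 c0n0 dir]].
exact: line_points_in_coordinates B_unit c0n0 dir (incid uv Luv).
Qed.
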